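(* Suppose that $n=m$ and $W=(w_{ij})\in(\mathbb{R}_{>0})^{n\times n}$ is symmetric. (a) The following recursion holds: $$T^{n,n}(W) = R^{n,n}_n \begin{pmatrix} \left[ R^{n,n-1}_n \begin{pmatrix} T^{n-1,n-1}(W_{n-1,n-1}) \\ w_{1n}\ \ldots\ w_{n-1,n} \end{pmatrix} \right]^t \\ w_{1n}\ \ldots\ w_{nn} \end{pmatrix} .$$ Moreover, if $(s_{ij})$ denote the elements of the $(n-1)\times n$ matrix $S=\left[ R^{n,n-1}_n \begin{pmatrix} T^{n-1,n-1}(W_{n-1,n-1})\\ w_{1n}\ \ldots\ w_{n-1,n} \end{pmatrix} \right]^t$ and $(t_{ij})$ the elements of $T^{n,n}(W)$, then $t_{ij}=s_{ij}$ for $1\le i<j\le n$, $t_{11}=s_{12}/(2s_{11})$, $t_{ii}=s_{i,i+1}s_{i-1,i}/s_{ii}$ for $2\le i\le n-1$, and $t_{nn}=2s_{n-1,n}w_{nn}$. (b) For $n\ge 1$, $$4^{\lfloor n/2\rfloor} \prod_{i=1}^n w_{ii} = \frac{\prod_{j=0}^{\lfloor\frac{n-1}2\rfloor} t_{n-2j, \,n-2j}}{\prod_{j=0}^{\lfloor\frac{n-2}2\rfloor} t_{n-1-2j,\, n-1-2j}} = \frac{\prod_{i\ \mathrm{odd}} z_{ni}}{\prod_{i\ \mathrm{even}} z_{ni}},$$ where $z_{ni}=t_{n-i+1,n-i+1}$, $1\le i\le n$.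
   Context: For $n,m\ge1$ and $X=(x_{ij})\in(\mathbb{R}_{>0})^{n\times m}$, define local moves: for $2\le i\le n$, $2\le j\le m$, $l_{ij}$ replaces the submatrix $\begin{pmatrix} x_{i-1,j-1}& x_{i-1,j}\\ x_{i,j-1}& x_{ij}\end{pmatrix}=\begin{pmatrix} a& b\\ c& d\end{pmatrix}$ by $\begin{pmatrix} bc/(ab+ac) & b\\ c& d(b+c) \end{pmatrix}$; $l_{i1}$ replaces $x_{i1}$ by $x_{i-1,1}x_{i1}$; $l_{1j}$ replaces $x_{1j}$ by $x_{1,j-1}x_{1j}$; $l_{11}$ is the identity. Set $\pi^j_i=l_{ij}\circ\cdots\circ l_{i1}$ and $R^{n,m}_i=\pi_1^{m-i+1}\circ\cdots\circ\pi^m_i$ if $i\le m$, $R^{n,m}_i=\pi^1_{i-m+1}\circ\cdots\circ\pi^m_i$ if $i\ge m$ (maps on $(\mathbb{R}_{>0})^{n\times m}$). The geometric RSK map is $T^{n,m}=R^{n,m}_n\circ\cdots\circ R^{n,m}_1$. $W_{k,k}=(w_{ij},1\le i,j\le k)$, and $M^t$ denotes transpose. The $z_{ni}$ are the bottom-row (shape) entries of the pattern $P$ associated with $T^{n,n}(W)$. *)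

(* Geometric RSK (O'Connell--Seppalainen--Zygouras local moves). *)
From HB Require Import structures.
From mathcomp Require Import all_boot all_order all_algebra.
Set Implicit Arguments. Unset Strict Implicit. Unset Printing Implicit Defensive.
Import Order.TTheory GRing.Theory Num.Theory.
Local Open Scope ring_scope.

Section GRSK.
Variable R : realFieldType.

Definition get {n m : nat} (X : 'M[R]_(n, m)) (p q : nat) : R :=
  match (insub p : option 'I_n), (insub q : option 'I_m) with
  | Some a, Some b => X a b
  | _, _ => 0
  end.

(* 1-indexed entry x_{ij}, as in the paper. *)
Definition ent {n m : nat} (X : 'M[R]_(n, m)) (i j : nat) : R := get X i.-1 j.-1.

Definition lmove {n m : nat} (i j : nat) (X : 'M[R]_(n, m)) : 'M[R]_(n, m) :=
  \matrix_(a < n, b < m)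
    let x := ent X in
    let a' := (a : nat).+1 in let b' := (b : nat).+1 in
    if (2 <= i)%N && (2 <= j)%N then
      if (a' == i.-1) && (b' == j.-1) then
        x i.-1 j * x i j.-1 / (x i.-1 j.-1 * x i.-1 j + x i.-1 j.-1 * x i j.-1)
      else if (a' == i) && (b' == j) then x i j * (x i.-1 j + x i j.-1)
      else X a b
    else if (2 <= i)%N && (j == 1%N) then
      if (a' == i) && (b' == 1%N) then x i.-1 1%N * x i 1%N else X a b
    else if (i == 1%N) && (2 <= j)%N then
      if (a' == 1%N) && (b' == j) then x 1%N j.-1 * x 1%N j else X a b
    else X a b.

(* pi^j_i = l_{ij} o ... o l_{i1}  (l_{i1} applied first). *)
Definition gpi {n m : nat} (i j : nat) (X : 'M[R]_(n, m)) : 'M[R]_(n, m) :=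
  foldl (fun Y k => lmove i k Y) X (iota 1 j).

(* R^{n,m}_i = pi^{m-min(i,m)+1}_{i-min(i,m)+1} o ... o pi^m_i
   (pi^m_i applied first); this covers both cases i <= m and i >= m. *)
Definition gR {n m : nat} (i : nat) (X : 'M[R]_(n, m)) : 'M[R]_(n, m) :=
  foldl (fun Y k => gpi (i - k) (m - k) Y) X (iota 0 (minn i m)).

(* T^{n,m} = R^{n,m}_n o ... o R^{n,m}_1  (R_1 applied first). *)
Definition gT {n m : nat} (X : 'M[R]_(n, m)) : 'M[R]_(n, m) :=
  foldl (fun Y i => gR i Y) X (iota 1 n).

Definition ulblock {n m : nat} (p q : nat) (X : 'M[R]_(n, m)) : 'M[R]_(p, q) :=
  \matrix_(a < p, b < q) get X a b.

(* Stack the matrix A (first rows) over the row r (1-indexed entries r 1 .. r q),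
   producing a p' x q matrix; used with p' = p + 1. *)
Definition stack_row {p q : nat} (p' : nat) (A : 'M[R]_(p, q)) (r : nat -> R)
  : 'M[R]_(p', q) :=
  \matrix_(a < p', b < q) if (a < p)%N then get A a b else r (b : nat).+1.

Definition zshape {n : nat} (W : 'M[R]_n) (i : nat) : R :=
  ent (gT W) (n - i + 1)%N (n - i + 1)%N.

End GRSK.

From HB Require Import structures.
From mathcomp Require Import all_boot all_order all_algebra.
From mathcomp Require Import zify ring lra.
From Stdlib Require Import FunctionalExtensionality.
Import Order.TTheory GRing.Theory Num.Theory.
Local Open Scope ring_scope.

Set Implicit Arguments. Unset Strict Implicit. Unset Printing Implicit Defensive.

(* T^{n,m} is a word in the local moves, and two moves whose 2x2 windows do not
   overlap commute; the words of T^{n,m} and of T^{m,n} read on the transposed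
   matrix differ only by such commutations, so T(X^t) = T(X)^t.  For symmetric W
   the matrix obtained after inserting the first n-1 rows is therefore the
   transpose of R^{n,n-1}_n applied to T^{n-1,n-1}(W_{n-1,n-1}) with the last row
   appended, which is the recursion (a).  In the last insertion R^{n,n}_n the
   entries above the diagonal are never touched and each diagonal entry is set
   by a single move whose other inputs are already final, so symmetry of T(W)
   gives the diagonal formulas.  In the alternating product of the diagonal of
   T(W) the entries of S then telescope, leaving a power of 2 times w_nn times
   the alternating product for T^{n-1,n-1}(W_{n-1,n-1}), and (b) follows by
   induction on n. *)

Lemma eq_foldl (A B : Type) (g h : A -> B -> A) a s :
  g =2 h -> foldl g a s = foldl h a s.
Proof. by move=> gh; elim: s a => //= x s IH a; rewrite gh IH. Qed.

Lemma foldl_map (A B C : Type) (g : A -> B -> A) (h : C -> B) a s :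
  foldl g a (map h s) = foldl (fun a x => g a (h x)) a s.
Proof. by elim: s a => //= x s IH a. Qed.

Lemma foldl_flatten_map (A B C : Type) (g : A -> B -> A) (F : C -> seq B) a s :
  foldl g a (flatten (map F s)) = foldl (fun a x => foldl g a (F x)) a s.
Proof. by elim: s a => //= x s IH a; rewrite foldl_cat IH. Qed.

Lemma sorted_cat_rel (T : eqType) (r : rel T) s1 s2 :
  sorted r s1 -> sorted r s2 -> {in s1 & s2, forall x y, r x y} ->
  sorted r (s1 ++ s2).
Proof.
case: s1 => [|x s1] //= Hs1 Hs2 H.
elim: s1 x Hs1 H => [|y s1 IH] x /=.
  move=> _ H; case: s2 Hs2 H => [|z s2] //= Hs2 H.
  by rewrite Hs2 andbT H // ?inE ?eqxx.
move=> /andP[rxy Hp] H; rewrite rxy /=; apply: IH => // a b Ha Hb.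
by apply: H => //; rewrite inE Ha orbT.
Qed.

Lemma sorted_rel_cat (T : eqType) (r : rel T) s1 s2 : transitive r ->
  sorted r (s1 ++ s2) -> {in s1 & s2, forall x y, r x y}.
Proof.
move=> tr; elim: s1 => [|a s1 IH] //= Hs y z; rewrite inE => /orP[/eqP->|ys1] zs2.
  by have /allP := order_path_min tr Hs; apply; rewrite mem_cat zs2 orbT.
by apply: IH => //; apply: path_sorted Hs.
Qed.

Lemma sorted_flatten_map (I T : eqType) (ri : rel I) (r : rel T) (F : I -> seq T) s :
  transitive ri -> sorted ri s -> {in s, forall i, sorted r (F i)} ->
  (forall i j, ri i j -> {in F i & F j, forall x y, r x y}) ->
  sorted r (flatten (map F s)).
Proof.
move=> tri; elim: s => [|i s IH] //= Hs HF Hr.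
apply: sorted_cat_rel.
- by apply: HF; rewrite inE eqxx.
- apply: IH => //; first exact: path_sorted Hs.
  by move=> j Hj; apply: HF; rewrite inE Hj orbT.
move=> x y Hx /flattenP[l /mapP[j Hj ->] Hy].
have /allP/(_ j Hj) rij := order_path_min tri Hs.
exact: Hr rij _ _ Hx Hy.
Qed.

Lemma foldl_commute_front (T : eqType) (A : Type) (M : T -> A -> A) x u a :
  {in u, forall y a, M x (M y a) = M y (M x a)} ->
  M x (foldl (fun a y => M y a) a u) = foldl (fun a y => M y a) (M x a) u.
Proof.
elim: u a => [|y u IH] a //= H.
rewrite IH; last by move=> z Hz; apply: H; rewrite inE Hz orbT.
by rewrite H // inE eqxx.
Qed.

(* Two words of actions that are permutations of each other give the same result
   when every pair of non-commuting letters occurs in the same order in both (the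
   orders being witnessed by [r1] and [r2]): the first letter of [s1] then
   commutes past everything that precedes it in [s2]. *)
Lemma foldl_perm_commute (T : eqType) (A : Type) (M : T -> A -> A) (dep r1 r2 : rel T)
    (s1 s2 : seq T) (a : A) :
  {in s1 &, forall x y, ~~ dep x y -> forall a, M x (M y a) = M y (M x a)} ->
  transitive r1 -> transitive r2 -> irreflexive r2 ->
  sorted r1 s1 -> sorted r2 s2 -> perm_eq s1 s2 ->
  {in s1 &, forall x y, dep x y -> r1 x y -> r2 x y} ->
  foldl (fun a x => M x a) a s1 = foldl (fun a x => M x a) a s2.
Proof.
move=> Hc tr1 tr2 ir2.
elim: s1 s2 a Hc => [|x s1 IH] s2 a Hc Hs1 Hs2 Hp Hd.
  by rewrite perm_sym in Hp; move/perm_nilP: Hp => ->.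
have Hu := sorted_uniq tr2 ir2 Hs2.
have xs2 : x \in s2 by rewrite -(perm_mem Hp) inE eqxx.
have E : s2 = take (index x s2) s2 ++ x :: drop (index x s2).+1 s2.
  by rewrite -{1}(cat_take_drop (index x s2) s2) (drop_nth x) ?index_mem // nth_index.
set u := take _ s2 in E; set v := drop _ s2 in E.
have xnu : x \notin u by move: Hu; rewrite E cat_uniq /= => /and4P[_ /norP[]].
have Hp2 : perm_eq s1 (u ++ v).
  by rewrite -(perm_cons x); apply: (perm_trans Hp); rewrite E -cat1s perm_catCA.
have us1 y : y \in u -> y \in s1.
  move=> yu; have : y \in x :: s1 by rewrite (perm_mem Hp) E mem_cat yu.
  by rewrite inE => /orP[/eqP yx|//]; rewrite -yx yu in xnu.
rewrite [in RHS]E foldl_cat /= (@foldl_commute_front _ _ M x u); last first.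
  move=> y yu b; have ys1 : y \in x :: s1 by rewrite inE us1 ?orbT.
  apply: (Hc x y (mem_head _ _) ys1).
  apply/negP => dxy.
  have r1xy : r1 x y by have /allP/(_ y (us1 y yu)) := order_path_min tr1 Hs1.
  have r2xy := Hd x y (mem_head _ _) ys1 dxy r1xy.
  have r2yx : r2 y x.
    by move: Hs2; rewrite E => /(sorted_rel_cat tr2); apply; rewrite ?mem_head.
  by have := ir2 y; rewrite (tr2 _ _ _ r2yx r2xy).
rewrite -foldl_cat; apply: IH => //.
- by move=> y z yi zi; apply: Hc; rewrite inE ?yi ?zi orbT.
- exact: path_sorted Hs1.
- apply: (@subseq_sorted _ r2 tr2 (u ++ v) s2) => //; rewrite E.
  by apply: cat_subseq => //; exact: subseq_cons.
- by move=> y z yi zi; apply: Hd; rewrite inE ?yi ?zi orbT.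
Qed.

Section LocalMoves.
Variable R : realFieldType.

Definition grid := nat -> nat -> R.

(* [lmove] acting on all of [nat * nat], so that words of moves can be
   reordered without reference to a matrix size. *)
Definition gmove (i j : nat) (f : grid) : grid := fun p q =>
  if (2 <= i)%N && (2 <= j)%N then
    if (p == i.-1) && (q == j.-1) then
      f i.-1 j * f i j.-1 / (f i.-1 j.-1 * f i.-1 j + f i.-1 j.-1 * f i j.-1)
    else if (p == i) && (q == j) then f i j * (f i.-1 j + f i j.-1)
    else f p q
  else if (2 <= i)%N && (j == 1%N) then
    if (p == i) && (q == 1%N) then f i.-1 1%N * f i 1%N else f p q
  else if (i == 1%N) && (2 <= j)%N then
    if (p == 1%N) && (q == j) then f 1%N j.-1 * f 1%N j else f p q
  else f p q.

Lemma entE n m (X : 'M[R]_(n, m)) p q (Hp : (p.-1 < n)%N) (Hq : (q.-1 < m)%N) :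
  ent X p q = X (Ordinal Hp) (Ordinal Hq).
Proof.
rewrite /ent /get (insubT (fun k => k < n)%N Hp) (insubT (fun k => k < m)%N Hq).
by congr (X _ _); apply: val_inj.
Qed.

Lemma ent_lmove n m (X : 'M[R]_(n, m)) i j p q :
  (0 < p <= n)%N -> (0 < q <= m)%N -> ent (lmove i j X) p q = gmove i j (ent X) p q.
Proof.
move=> /andP[p0 pn] /andP[q0 qm].
have Hp : (p.-1 < n)%N by lia.
have Hq : (q.-1 < m)%N by lia.
by rewrite (entE _ Hp Hq) /lmove mxE /= (prednK p0) (prednK q0) -(entE X Hp Hq).
Qed.

Lemma gmove_out i j f p q :
  ~~ ((p == i) && (q == j)) -> ~~ ((p == i.-1) && (q == j.-1)) -> gmove i j f p q = f p q.
Proof.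
move=> H1 H2; rewrite /gmove (negbTE H2) (negbTE H1).
case: ifP => _ //; case: ifP => [/andP[_ /eqP j1]|_].
  by subst j; rewrite (negbTE H1).
by case: ifP => [/andP[/eqP i1 _]|//]; subst i; rewrite (negbTE H1).
Qed.

Lemma gmove_local i j (f g : grid) p q :
  (forall a b, (a == i.-1) || (a == i) -> (b == j.-1) || (b == j) -> f a b = g a b) ->
  f p q = g p q -> gmove i j f p q = gmove i j g p q.
Proof.
move=> H Hpq; rewrite /gmove.
have E1 : f i.-1 j = g i.-1 j by apply: H; rewrite eqxx ?orbT.
have E2 : f i j.-1 = g i j.-1 by apply: H; rewrite eqxx ?orbT.
have E3 : f i.-1 j.-1 = g i.-1 j.-1 by apply: H; rewrite eqxx ?orbT.
have E4 : f i j = g i j by apply: H; rewrite eqxx ?orbT.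
rewrite E1 E2 E3 E4 Hpq.
case: ifP => _ //; case: ifP => [/andP[ _ /eqP j1]|_].
  by rewrite -j1 E1 E4.
by case: ifP => [/andP[/eqP i1 _]|//]; rewrite -i1 E2 E4.
Qed.

(* [l_{ab}] and [l_{cd}] can fail to commute only when [(c, d)] is within distance 1
   of [(a, b)] in each coordinate and is not [(a+1, b-1)] or [(a-1, b+1)]. *)
Definition interact (a b c d : nat) : bool :=
  [&& (a <= c.+1)%N, (c <= a.+1)%N, (b <= d.+1)%N, (d <= b.+1)%N,
      ~~ ((c == a.+1) && (d.+1 == b)) & ~~ ((a == c.+1) && (b.+1 == d))].

Lemma interactC a b c d : interact a b c d = interact c d a b.
Proof. by rewrite /interact; apply/idP/idP; lia. Qed.

Lemma gmove_comm_at i j i' j' f p q :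
  (0 < i)%N -> (0 < j)%N -> (0 < i')%N -> (0 < j')%N -> ~~ interact i j i' j' ->
  ((p == i) && (q == j)) || ((p == i.-1) && (q == j.-1)) ->
  gmove i j (gmove i' j' f) p q = gmove i' j' (gmove i j f) p q.
Proof.
move=> i0 j0 i0' j0' nd Wpq.
have disj a b : (a == i.-1) || (a == i) -> (b == j.-1) || (b == j) ->
    ~~ ((a == i') && (b == j')) && ~~ ((a == i'.-1) && (b == j'.-1)).
  by move: nd; rewrite /interact; lia.
have /andP[h1 h2] := disj p q ltac:(lia) ltac:(lia).
rewrite [RHS]gmove_out //; apply: gmove_local; last by rewrite gmove_out.
by move=> a b Ha Hb; case/andP: (disj a b Ha Hb) => g1 g2; rewrite gmove_out.
Qed.

Lemma gmove_comm i j i' j' f :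
  (0 < i)%N -> (0 < j)%N -> (0 < i')%N -> (0 < j')%N -> ~~ interact i j i' j' ->
  gmove i j (gmove i' j' f) = gmove i' j' (gmove i j f).
Proof.
move=> i0 j0 i0' j0' nd; apply: functional_extensionality => p.
apply: functional_extensionality => q.
case W1: (((p == i) && (q == j)) || ((p == i.-1) && (q == j.-1))).
  exact: gmove_comm_at.
case W2: (((p == i') && (q == j')) || ((p == i'.-1) && (q == j'.-1))).
  by symmetry; apply: gmove_comm_at => //; rewrite interactC.
by rewrite !gmove_out //; lia.
Qed.

Definition transp (f : grid) : grid := fun p q => f q p.

Lemma transp_gmove i j f : transp (gmove i j f) = gmove j i (transp f).
Proof.
apply: functional_extensionality => p; apply: functional_extensionality => q.
rewrite /transp /gmove.
case: (boolP (2 <= i)%N) => i2; case: (boolP (2 <= j)%N) => j2 /=.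
- rewrite [(q == _) && _]andbC [(p == j) && _]andbC.
  case: ifP => _; first by rewrite [_ * f _ j.-1]mulrC [_ + f i.-1 j.-1 * f i j.-1]addrC.
  by case: ifP => _ //; rewrite addrC.
- case: (boolP (j == 1%N)) => [/eqP j1|jn1] /=; first by rewrite andbC.
  by rewrite !andbF.
- by rewrite andbT andbF; case: ifP => _ //; rewrite andbC.
- by rewrite !andbF.
Qed.

End LocalMoves.
Arguments gmove {R} i j f p q.
Arguments transp {R} f p q.

Definition run_moves (A : Type) (M : nat -> nat -> A -> A) (L : seq (nat * nat)) (a : A) :=
  foldl (fun a x => M x.1 x.2 a) a L.

Definition pi_moves (i j : nat) := [seq (i, c) | c <- iota 1 j].
Definition R_moves (m i : nat) :=
  flatten [seq pi_moves (i - k) (m - k) | k <- iota 0 (minn i m)].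
Definition T_moves (n m : nat) := flatten [seq R_moves m i | i <- iota 1 n].

Lemma run_moves_cat A M L1 L2 (a : A) :
  run_moves M (L1 ++ L2) a = run_moves M L2 (run_moves M L1 a).
Proof. by rewrite /run_moves foldl_cat. Qed.

Lemma T_movesS n m : T_moves n.+1 m = T_moves n m ++ R_moves m n.+1.
Proof. by rewrite /T_moves -(addn1 n) iotaD map_cat flatten_cat /= cats0 addnC. Qed.

Lemma T_moves_pred n m : (0 < n)%N -> T_moves n m = T_moves n.-1 m ++ R_moves m n.
Proof. by case: n => // n _; rewrite T_movesS. Qed.

Lemma mem_pi_moves i j x : x \in pi_moves i j -> x.1 = i /\ (0 < x.2 <= j)%N.
Proof. by case/mapP => c; rewrite mem_iota => Hc ->; split => //=; lia. Qed.

Lemma mem_R_moves m i x : x \in R_moves m i ->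
  exists k c, [/\ (k < minn i m)%N, (0 < c <= m - k)%N & x = ((i - k)%N, c)].
Proof.
case/flattenP => l /mapP[k Hk ->] /mapP[c Hc ->].
by exists k, c; move: Hk Hc; rewrite !mem_iota; split => //; lia.
Qed.

Lemma mem_T_moves n m x : x \in T_moves n m ->
  exists i k c, [/\ (0 < i <= n)%N, (k < minn i m)%N, (0 < c <= m - k)%N
                  & x = ((i - k)%N, c)].
Proof.
case/flattenP => l /mapP[i Hi ->] /mem_R_moves [k [c [H1 H2 ->]]].
by exists i, k, c; move: Hi; rewrite mem_iota; split => //; lia.
Qed.

Definition moves_in n m (L : seq (nat * nat)) :=
  forall x, x \in L -> (0 < x.1 <= n)%N /\ (0 < x.2 <= m)%N.

Lemma T_moves_in n' n m : (n' <= n)%N -> moves_in n m (T_moves n' m).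
Proof. by move=> H x /mem_T_moves[i [k [c [H1 H2 H3 ->]]]] /=; lia. Qed.

Lemma R_moves_in n m i : (i <= n)%N -> moves_in n m (R_moves m i).
Proof. by move=> H x /mem_R_moves[k [c [H2 H3 ->]]] /=; lia. Qed.

Section RunMoves.
Variable R : realFieldType.
Implicit Types f g : grid R.

Lemma gR_run n m i (X : 'M[R]_(n, m)) : gR i X = run_moves (@lmove R n m) (R_moves m i) X.
Proof.
rewrite /gR /run_moves /R_moves foldl_flatten_map; apply: eq_foldl => Z k.
by rewrite /gpi /pi_moves foldl_map.
Qed.

Lemma gT_run n m (X : 'M[R]_(n, m)) : gT X = run_moves (@lmove R n m) (T_moves n m) X.
Proof.
rewrite /gT /run_moves /T_moves foldl_flatten_map; apply: eq_foldl => Y i.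
by rewrite gR_run.
Qed.

Definition agree_on n m f g :=
  forall p q, (0 < p <= n)%N -> (0 < q <= m)%N -> f p q = g p q.

Definition pos_on n m f := forall p q, (0 < p <= n)%N -> (0 < q <= m)%N -> 0 < f p q.

Lemma gmove_agree n m i j f g : (0 < i <= n)%N -> (0 < j <= m)%N ->
  agree_on n m f g -> agree_on n m (gmove i j f) (gmove i j g).
Proof.
move=> Hi Hj H p q Hp Hq; rewrite /gmove.
case: ifP => [/andP[i2 j2]|_].
  by rewrite (H i.-1 j) ?(H i j.-1) ?(H i.-1 j.-1) ?(H i j) ?(H p q) //; lia.
case: ifP => [/andP[i2 /eqP j1]|_].
  by rewrite (H i.-1 1%N) ?(H i 1%N) ?(H p q) //; lia.
case: ifP => [/andP[/eqP i1 j2]|_]; last exact: H.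
by rewrite (H 1%N j.-1) ?(H 1%N j) ?(H p q) //; lia.
Qed.

Lemma run_agree n m L f g : moves_in n m L -> agree_on n m f g ->
  agree_on n m (run_moves gmove L f) (run_moves gmove L g).
Proof.
elim: L f g => [|x L IH] f g //= HL H.
apply: IH; first by move=> y Hy; apply: HL; rewrite inE Hy orbT.
by have [H1 H2] := HL x (mem_head _ _); apply: gmove_agree.
Qed.

Lemma ent_run n m (X : 'M[R]_(n, m)) L f : moves_in n m L -> agree_on n m (ent X) f ->
  agree_on n m (ent (run_moves (@lmove R n m) L X)) (run_moves gmove L f).
Proof.
elim: L X f => [|x L IH] X f //= HL H.
apply: IH; first by move=> y Hy; apply: HL; rewrite inE Hy orbT.
have [H1 H2] := HL x (mem_head _ _).
by move=> p q Hp Hq; rewrite ent_lmove //; apply: (gmove_agree H1 H2 H).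
Qed.

Lemma run_out L f p q :
  {in L, forall x, ~~ ((p == x.1) && (q == x.2)) && ~~ ((p == x.1.-1) && (q == x.2.-1))} ->
  run_moves gmove L f p q = f p q.
Proof.
elim: L f => [|x L IH] f //= H.
rewrite /run_moves /= -/(run_moves gmove L _) IH; last first.
  by move=> y Hy; apply: H; rewrite inE Hy orbT.
by case/andP: (H x (mem_head _ _)) => h1 h2; rewrite gmove_out.
Qed.

Lemma gmove_pos n m i j f : (0 < i <= n)%N -> (0 < j <= m)%N ->
  pos_on n m f -> pos_on n m (gmove i j f).
Proof.
move=> Hi Hj H p q Hp Hq; rewrite /gmove.
case: ifP => [/andP[i2 j2]|_].
  have h1 := H i.-1 j ltac:(lia) ltac:(lia).
  have h2 := H i j.-1 ltac:(lia) ltac:(lia).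
  have h3 := H i.-1 j.-1 ltac:(lia) ltac:(lia).
  have h4 := H i j ltac:(lia) ltac:(lia).
  case: ifP => _; first by rewrite divr_gt0 ?mulr_gt0 ?addr_gt0 ?mulr_gt0.
  by case: ifP => _; [rewrite mulr_gt0 ?addr_gt0 | exact: H].
case: ifP => [/andP[i2 /eqP j1]|_].
  by case: ifP => _; [rewrite mulr_gt0 // H //; lia | exact: H].
case: ifP => [/andP[/eqP i1 j2]|_]; last exact: H.
by case: ifP => _; [rewrite mulr_gt0 // H //; lia | exact: H].
Qed.

Lemma run_pos n m L f : moves_in n m L -> pos_on n m f -> pos_on n m (run_moves gmove L f).
Proof.
elim: L f => [|x L IH] f //= HL H.
apply: IH; first by move=> y Hy; apply: HL; rewrite inE Hy orbT.
by have [H1 H2] := HL x (mem_head _ _); apply: gmove_pos.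
Qed.

End RunMoves.
Arguments agree_on {R} n m f g.
Arguments pos_on {R} n m f.

Section Transposition.

(* The letter [(i, k, c)] of [T_moves n m] is the move [l_{i-k, c}] performed in
   [R_i] by [pi^{m-k}_{i-k}]; [swap_label] sends it to the label of the same cell
   in [T_moves m n] with rows and columns exchanged. *)
Definition T_labels (n m : nat) : seq (nat * nat * nat) :=
  flatten [seq flatten [seq [seq (i, k, c) | c <- iota 1 (m - k)]
                       | k <- iota 0 (minn i m)]
          | i <- iota 1 n].

Definition label_move (x : nat * nat * nat) := ((x.1.1 - x.1.2)%N, x.2).
Definition swap_label (x : nat * nat * nat) := ((x.2 + x.1.2)%N, x.1.2, (x.1.1 - x.1.2)%N).

Definition lex3 (x y : nat * nat * nat) : bool :=
  (x.1.1 < y.1.1)%N ||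
  (x.1.1 == y.1.1) && ((x.1.2 < y.1.2)%N || (x.1.2 == y.1.2) && (x.2 < y.2)%N).
Definition lex3_swap x y := lex3 (swap_label x) (swap_label y).

Lemma T_moves_labels n m : T_moves n m = map label_move (T_labels n m).
Proof.
rewrite /T_moves /T_labels map_flatten -map_comp; congr flatten; apply: eq_map => i /=.
rewrite /R_moves map_flatten -map_comp; congr flatten; apply: eq_map => k /=.
by rewrite /pi_moves -map_comp.
Qed.

Lemma mem_T_labels n m i k c :
  ((i, k, c) \in T_labels n m) = [&& (0 < i <= n)%N, (k < minn i m)%N & (0 < c <= m - k)%N].
Proof.
apply/idP/idP.
  case/flattenP => l /mapP[i' Hi' ->] /flattenP[l' /mapP[k' Hk' ->]].
  by case/mapP=> c' Hc' [-> -> ->]; move: Hi' Hk' Hc'; rewrite !mem_iota; lia.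
case/and3P => Hi Hk Hc; apply/flattenP.
exists (flatten [seq [seq (i, k0, c0) | c0 <- iota 1 (m - k0)] | k0 <- iota 0 (minn i m)]).
  by apply/mapP; exists i => //; rewrite mem_iota; lia.
apply/flattenP; exists [seq (i, k, c0) | c0 <- iota 1 (m - k)].
  by apply/mapP; exists k => //; rewrite mem_iota; lia.
by apply/mapP; exists c => //; rewrite mem_iota; lia.
Qed.

Lemma lex3_trans : transitive lex3.
Proof. by move=> y x z; rewrite /lex3; lia. Qed.
Lemma lex3_irr : irreflexive lex3.
Proof. by move=> x; rewrite /lex3; lia. Qed.
Lemma lex3_swap_trans : transitive lex3_swap.
Proof. by move=> y x z; apply: lex3_trans. Qed.
Lemma lex3_swap_irr : irreflexive lex3_swap.
Proof. by move=> x; apply: lex3_irr. Qed.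

Lemma sorted_T_labels n m : sorted lex3 (T_labels n m).
Proof.
apply: (@sorted_flatten_map _ _ ltn); [exact: ltn_trans|exact: iota_ltn_sorted| |].
  move=> i _; apply: (@sorted_flatten_map _ _ ltn);
    [exact: ltn_trans|exact: iota_ltn_sorted| |].
    move=> k _; rewrite sorted_map; apply: sub_sorted (iota_ltn_sorted _ _).
    by move=> a b /=; rewrite /lex3 /=; lia.
  by move=> k k' kk' x y /mapP[c _ ->] /mapP[c' _ ->]; rewrite /lex3 /=; lia.
move=> i i' ii' x y /flattenP[l /mapP[k _ ->] /mapP[c _ ->]].
by move=> /flattenP[l' /mapP[k' _ ->] /mapP[c' _ ->]]; rewrite /lex3 /=; lia.
Qed.

Lemma swap_labelK n m : {in T_labels n m, involutive swap_label}.
Proof. by case=> [[i k] c]; rewrite mem_T_labels /swap_label /= => H; congr (_, _, _); lia. Qed.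

Lemma sorted_swap_T_labels m n : sorted lex3_swap (map swap_label (T_labels m n)).
Proof.
rewrite sorted_map; apply: (@sub_in_sorted _ (mem (T_labels m n)) lex3).
- by move=> x y Hx Hy; rewrite /relpre /lex3_swap /= !(swap_labelK Hx, swap_labelK Hy).
- by apply/allP.
- exact: sorted_T_labels.
Qed.

Lemma perm_T_labels n m : perm_eq (T_labels n m) (map swap_label (T_labels m n)).
Proof.
apply: uniq_perm.
- exact: (sorted_uniq lex3_trans lex3_irr (sorted_T_labels n m)).
- exact: (sorted_uniq lex3_swap_trans lex3_swap_irr (sorted_swap_T_labels m n)).
case=> [[i k] c]; apply/idP/idP.
  move=> H; apply/mapP; exists (swap_label (i, k, c)); last by rewrite (swap_labelK H).
  by move: H; rewrite /swap_label /= !mem_T_labels; lia.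
by case/mapP=> [[[i' k'] c']]; rewrite mem_T_labels /swap_label /= => H [-> -> ->];
  rewrite mem_T_labels; lia.
Qed.

Lemma interact_T_labels n m : {in T_labels n m &, forall x y,
  interact (label_move x).1 (label_move x).2 (label_move y).1 (label_move y).2 ->
  lex3 x y -> lex3_swap x y}.
Proof.
case=> [[i k] c] [[i' k'] c']; rewrite !mem_T_labels.
by rewrite /label_move /lex3_swap /swap_label /lex3 /interact /=; lia.
Qed.

Variable R : realFieldType.

Lemma transp_run L (f : grid R) :
  transp (run_moves gmove L f) = run_moves gmove (map (fun x => (x.2, x.1)) L) (transp f).
Proof.
elim: L f => [|x L IH] f //=.
by rewrite /run_moves /= -/(run_moves gmove L _) -/(run_moves gmove _ _) IH transp_gmove.
Qed.

Lemma run_T_moves_transp n m (f : grid R) :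
  run_moves gmove (T_moves n m) f = transp (run_moves gmove (T_moves m n) (transp f)).
Proof.
rewrite transp_run !T_moves_labels.
have -> : [seq (x.2, x.1) | x <- [seq label_move i | i <- T_labels m n]] =
          map label_move (map swap_label (T_labels m n)).
  by rewrite -!map_comp; apply: eq_map => x /=; rewrite /label_move /swap_label /=;
    congr (_, _); lia.
rewrite /run_moves [LHS]foldl_map [RHS]foldl_map.
apply: (@foldl_perm_commute _ _ (fun x a => gmove (label_move x).1 (label_move x).2 a)
   (fun x y => interact (label_move x).1 (label_move x).2 (label_move y).1 (label_move y).2)
   lex3 lex3_swap).
- case=> [[i k] c] [[i' k'] c']; rewrite !mem_T_labels /label_move /= => H1 H2 nd a.
  by apply: gmove_comm => //; lia.
- exact: lex3_trans.
- exact: lex3_swap_trans.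
- exact: lex3_swap_irr.
- exact: sorted_T_labels.
- exact: sorted_swap_T_labels.
- exact: perm_T_labels.
- exact: interact_T_labels.
Qed.

End Transposition.

Section AlternatingProduct.
Variable R : realFieldType.
Implicit Type t : nat -> R.

Fixpoint altprod t k : R := if k is k'.+1 then t k'.+1 / altprod t k' else 1.

Lemma eq_altprod t t' k : {in [pred p | 0 < p <= k]%N, t =1 t'} -> altprod t k = altprod t' k.
Proof.
elim: k => [|k IH] //= H; rewrite H ?inE; last lia.
by rewrite IH // => p; rewrite inE => Hp; apply: H; rewrite inE; lia.
Qed.

Lemma altprod_gt0 t k : {in [pred p | 0 < p <= k]%N, forall p, 0 < t p} -> 0 < altprod t k.
Proof.
elim: k => [|k IH] //= H; apply: divr_gt0; first by apply: H; rewrite inE; lia.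
by apply: IH => p; rewrite inE => Hp; apply: H; rewrite inE; lia.
Qed.

End AlternatingProduct.

Section SymmetricInsertion.
Variable R : realFieldType.
Variable n : nat.
Variable f : grid R.
Hypothesis n_ge2 : (2 <= n)%N.
Hypothesis f_sym : transp f = f.
Hypothesis f_pos : pos_on n n f.

(* [Grows] is the grid after inserting the first [n-1] rows, [Tprev] is
   [T^{n-1,n-1}] of the upper-left block and [Tfull] is [T^{n,n}]. *)
Definition Grows := run_moves gmove (T_moves n.-1 n) f.
Definition Tprev := run_moves gmove (T_moves n.-1 n.-1) f.
Definition Tfull := run_moves gmove (T_moves n n) f.

Let n_eq : n = n.-1.+1. Proof. lia. Qed.

Lemma Tfull_sym p q : Tfull p q = Tfull q p.
Proof. by have E := run_T_moves_transp n n f; rewrite f_sym in E; rewrite /Tfull {1}E. Qed.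

Lemma Grows_transp : Grows = transp (run_moves gmove (T_moves n n.-1) f).
Proof. by have E := run_T_moves_transp n.-1 n f; rewrite f_sym in E; rewrite /Grows {1}E. Qed.

Lemma Tfull_Grows : Tfull = run_moves gmove (R_moves n n) Grows.
Proof. by rewrite /Tfull T_moves_pred ?run_moves_cat //; lia. Qed.

Lemma Grows_pos : pos_on n n Grows.
Proof. by apply: run_pos f_pos; apply: T_moves_in; lia. Qed.

Lemma Grows_last_row q : Grows n q = f n q.
Proof. by apply: run_out => x /mem_T_moves[i [k [c [H1 H2 H3 ->]]]] /=; lia. Qed.

Lemma Tprev_last_row q : Tprev n q = f n q.
Proof. by apply: run_out => x /mem_T_moves[i [k [c [H1 H2 H3 ->]]]] /=; lia. Qed.

Lemma Grows_diag p : (0 < p <= n.-1)%N -> Grows p p = Tprev p p.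
Proof.
move=> Hp; rewrite Grows_transp /transp T_moves_pred ?run_moves_cat -/Tprev; last lia.
by apply: run_out => x /mem_R_moves[k [c [H2 H3 ->]]] /=; lia.
Qed.

(* The last insertion [R^{n,n}_n] is [pi^{n}_{n}], then [pi^{n-1}_{n-1}], ...;
   [Gstage j] is the grid after its first [j] blocks, and [Gmid j] the grid just
   before the final (diagonal) move [l_{n-j, n-j}] of block [j]. *)
Definition Rn_prefix j := flatten [seq pi_moves (n - k) (n - k) | k <- iota 0 j].
Definition Gstage j := run_moves gmove (Rn_prefix j) Grows.
Definition Gmid j := run_moves gmove (pi_moves (n - j) (n - j).-1) (Gstage j).

Lemma mem_Rn_blocks a l x : x \in flatten [seq pi_moves (n - k) (n - k) | k <- iota a l] ->
  exists k c, [/\ (a <= k < a + l)%N, (0 < c <= n - k)%N & x = ((n - k)%N, c)].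
Proof.
case/flattenP => s /mapP[k Hk ->] /mapP[c Hc ->].
by exists k, c; move: Hk Hc; rewrite !mem_iota; split => //; lia.
Qed.

Lemma Tfull_Gstage : Tfull = Gstage n.
Proof. by rewrite Tfull_Grows /Gstage /Rn_prefix /R_moves minnn. Qed.

Lemma Rn_prefix_split j : (j <= n)%N ->
  Rn_prefix n = Rn_prefix j ++ flatten [seq pi_moves (n - k) (n - k) | k <- iota j (n - j)].
Proof.
move=> Hj; have E : iota 0 n = iota 0 j ++ iota j (n - j) by rewrite -iotaD subnKC.
by rewrite /Rn_prefix E map_cat flatten_cat.
Qed.

Lemma Rn_prefixS j : Rn_prefix j.+1 = Rn_prefix j ++ pi_moves (n - j) (n - j).
Proof. by rewrite /Rn_prefix -(addn1 j) iotaD map_cat flatten_cat /= cats0. Qed.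

Lemma Gstage_upper j p q : (p < q)%N -> Gstage j p q = Grows p q.
Proof. by move=> H; apply: run_out => x /mem_Rn_blocks[k [c [H1 H2 ->]]] /=; lia. Qed.

Lemma Gstage_above j p q : (p < n - j)%N -> Gstage j p q = Grows p q.
Proof. by move=> Hp; apply: run_out => x /mem_Rn_blocks[k [c [H1 H2 ->]]] /=; lia. Qed.

Lemma Tfull_Gstage_below j p q : (j <= n)%N -> (n - j < p)%N -> Tfull p q = Gstage j p q.
Proof.
move=> Hj Hp; rewrite Tfull_Gstage /Gstage (Rn_prefix_split Hj) run_moves_cat.
by apply: run_out => x /mem_Rn_blocks[k [c [H1 H2 ->]]] /=; lia.
Qed.

Lemma pi_moves_diag r : (0 < r)%N -> pi_moves r r = pi_moves r r.-1 ++ [:: (r, r)].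
Proof.
case: r => // r _ /=.
by rewrite /pi_moves -[in iota 1 r.+1](addn1 r) iotaD map_cat /= add1n.
Qed.

Lemma GstageS j : (j < n)%N -> Gstage j.+1 = gmove (n - j) (n - j) (Gmid j).
Proof.
move=> Hj; rewrite /Gstage Rn_prefixS run_moves_cat (pi_moves_diag (_ : 0 < n - j)%N);
  last lia.
by rewrite run_moves_cat.
Qed.

Lemma Gmid_out j p q :
  ~~ ((p == (n - j)%N) && (q < n - j)%N) -> ~~ ((p == (n - j - 1)%N) && (q < n - j - 1)%N) ->
  Gmid j p q = Gstage j p q.
Proof. by move=> h1 h2; apply: run_out => x /mem_pi_moves[/= -> Hx]; lia. Qed.

(* Entry [(r, r)] is set by the move [l_{r+1, r+1}]; its neighbours [(r+1, r)]
   and [(r, r+1)] are then already final, hence equal by symmetry of [Tfull]. *)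
Lemma Gstage_diag r : (0 < r <= n.-1)%N ->
  Gstage (n - r) r r = Grows r r.+1 / (2 * Grows r r).
Proof.
move=> Hr; set j := (n - r - 1)%N.
have E : (n - r = j.+1)%N by rewrite /j; lia.
have Enj : (n - j = r.+1)%N by rewrite /j; lia.
have h1 : Gmid j r r.+1 = Grows r r.+1.
  by rewrite Gmid_out ?Gstage_upper //; rewrite Enj; lia.
have h2 : Gmid j r r = Grows r r.
  by rewrite Gmid_out ?Gstage_above //; rewrite Enj; lia.
have h3 : Gmid j r.+1 r = Grows r r.+1.
  have : Tfull r.+1 r = Gstage j.+1 r.+1 r by apply: Tfull_Gstage_below; lia.
  rewrite GstageS; last lia.
  rewrite Enj gmove_out; last 2 first.
  - by apply/negP => /andP[_ /eqP]; lia.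
  - by apply/negP => /andP[/eqP]; lia.
  by move <-; rewrite Tfull_sym Tfull_Gstage Gstage_upper.
have p1 : 0 < Grows r r.+1 by apply: Grows_pos; lia.
have p2 : 0 < Grows r r by apply: Grows_pos; lia.
rewrite E GstageS; last lia.
have r1_ge2 : (2 <= r.+1)%N by lia.
rewrite Enj /gmove /= r1_ge2 !eqxx /= h1 h2 h3.
by field; rewrite !lt0r_neq0 // ?addr_gt0 // mulr_gt0.
Qed.

Lemma Tfull_diag_rec r : (2 <= r <= n)%N ->
  Tfull r r = Gstage (n - r) r r * (2 * Grows r.-1 r).
Proof.
move=> Hr; set j := (n - r)%N.
have Enj : (n - j = r)%N by rewrite /j; lia.
have h1 : Gmid j r r = Gstage j r r by rewrite Gmid_out //; rewrite Enj; lia.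
have h2 : Gmid j r.-1 r = Grows r.-1 r.
  by rewrite Gmid_out ?Gstage_upper //; try lia; rewrite Enj; lia.
have h3 : Gmid j r r.-1 = Grows r.-1 r.
  have : Tfull r r.-1 = Gstage j.+1 r r.-1 by apply: Tfull_Gstage_below; rewrite /j; lia.
  rewrite GstageS; last by rewrite /j; lia.
  rewrite Enj gmove_out; last 2 first.
  - by apply/negP => /andP[_ /eqP]; lia.
  - by apply/negP => /andP[/eqP]; lia.
  by move <-; rewrite Tfull_sym Tfull_Gstage Gstage_upper //; lia.
have -> : Tfull r r = Gstage j.+1 r r by apply: Tfull_Gstage_below; rewrite /j; lia.
rewrite GstageS; last by rewrite /j; lia.
have r_ge2 : ((2 <= r)%N && (2 <= r)%N) = true by lia.
have r_neq : (r == r.-1) = false by lia.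
by rewrite Enj /gmove r_ge2 r_neq /= eqxx /= h1 h2 h3; ring.
Qed.

Lemma Tfull_upper i j : (i < j)%N -> Tfull i j = Grows i j.
Proof. by move=> H; rewrite Tfull_Gstage Gstage_upper. Qed.

Lemma Tfull_diag1 : Tfull 1%N 1%N = Grows 1%N 2%N / (2 * Grows 1%N 1%N).
Proof.
have E1 : (n - (n - 1) = 1)%N by lia.
rewrite Tfull_Gstage (_ : Gstage n = Gstage (n - 1).+1); last by congr Gstage; lia.
rewrite GstageS; last lia.
rewrite E1 /gmove /= /Gmid E1 /= /run_moves /=.
by rewrite (Gstage_diag (r := 1)) //; lia.
Qed.

Lemma Tfull_diag_mid i : (2 <= i <= n.-1)%N ->
  Tfull i i = Grows i i.+1 * Grows i.-1 i / Grows i i.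
Proof.
move=> Hi; rewrite Tfull_diag_rec ?Gstage_diag; try lia.
have p2 : 0 < Grows i i by apply: Grows_pos; lia.
by field; rewrite lt0r_neq0.
Qed.

Lemma Tfull_diag_last : Tfull n n = 2 * Grows n.-1 n * f n n.
Proof.
rewrite Tfull_diag_rec; last lia.
by rewrite subnn /Gstage /Rn_prefix /= /run_moves /= Grows_last_row; ring.
Qed.

Lemma altprod_Tfull_diag k : (0 < k <= n.-1)%N ->
  altprod (fun p => Tfull p p) k =
  Grows k k.+1 * (if odd k then 2^-1 else 2) / altprod (fun p => Grows p p) k.
Proof.
elim: k => [|k IHk] // Hk.
have G_pos p q : (0 < p <= n)%N -> (0 < q <= n)%N -> Grows p q != 0.
  by move=> Hp Hq; rewrite lt0r_neq0 // Grows_pos.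
case: (posnP k) => [->|k_gt0].
  by rewrite /= Tfull_diag1 !divr1; field; apply: G_pos; lia.
rewrite [LHS]/= [altprod _ k.+1]/= IHk; last lia.
rewrite Tfull_diag_mid; last lia.
have altG : altprod (fun p => Grows p p) k != 0.
  by rewrite lt0r_neq0 // altprod_gt0 // => p; rewrite inE => Hp; apply: Grows_pos; lia.
by rewrite oddS succnK; case: (odd k) => /=; field; rewrite altG !G_pos //; lia.
Qed.

Lemma altprod_Tfull_diag_last :
  altprod (fun p => Tfull p p) n =
  (if odd n.-1 then 4 else 1) * f n n * altprod (fun p => Grows p p) n.-1.
Proof.
rewrite {1}n_eq /= altprod_Tfull_diag; last lia.
rewrite -n_eq Tfull_diag_last.
have Gn : Grows n.-1 n != 0 by rewrite lt0r_neq0 // Grows_pos //; lia.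
have altG : altprod (fun p => Grows p p) n.-1 != 0.
  by rewrite lt0r_neq0 // altprod_gt0 // => p; rewrite inE => Hp; apply: Grows_pos; lia.
by case: (odd n.-1); field; rewrite Gn altG.
Qed.

End SymmetricInsertion.

Section MatrixEntries.
Variable R : realFieldType.

Lemma ent_tr n m (M : 'M[R]_(n, m)) p q : ent M^T p q = ent M q p.
Proof.
rewrite /ent /get.
case: (ltnP p.-1 m) => Ha; case: (ltnP q.-1 n) => Hb.
- rewrite (insubT (fun k => k < m)%N Ha) (insubT (fun k => k < n)%N Hb) mxE.
  by congr (M _ _); apply: val_inj.
- have Hb' : (q.-1 < n)%N = false by lia.
  by rewrite (insubT (fun k => k < m)%N Ha) !(@insubF _ (fun k => (k < n)%N) _ q.-1 Hb').
- have Ha' : (p.-1 < m)%N = false by lia.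
  by rewrite (insubT (fun k => k < n)%N Hb) !(@insubF _ (fun k => (k < m)%N) _ p.-1 Ha').
- have Ha' : (p.-1 < m)%N = false by lia.
  have Hb' : (q.-1 < n)%N = false by lia.
  by rewrite (@insubF _ (fun k => (k < m)%N) _ p.-1 Ha') (@insubF _ (fun k => (k < n)%N) _ q.-1 Hb').
Qed.

Lemma ent_ulblock n m p q (X : 'M[R]_(n, m)) a b : (0 < a <= p)%N -> (0 < b <= q)%N ->
  ent (ulblock p q X) a b = ent X a b.
Proof.
move=> Ha Hb; have Ha' : (a.-1 < p)%N by lia.
have Hb' : (b.-1 < q)%N by lia.
by rewrite (entE _ Ha' Hb') mxE.
Qed.

Lemma ent_stack_row p q p' (A : 'M[R]_(p, q)) r a b : (0 < a <= p')%N -> (0 < b <= q)%N ->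
  ent (stack_row p' A r) a b = if (a <= p)%N then ent A a b else r b.
Proof.
move=> Ha Hb; have Ha' : (a.-1 < p')%N by lia.
have Hb' : (b.-1 < q)%N by lia.
rewrite (entE _ Ha' Hb') mxE /= (_ : (a.-1 < p)%N = (a <= p)%N); last lia.
by rewrite (prednK (_ : 0 < b)%N) //; lia.
Qed.

Lemma matrix_ent n m (X Y : 'M[R]_(n, m)) : agree_on n m (ent X) (ent Y) -> X = Y.
Proof.
move=> H; apply/matrixP => a b.
have Ha : ((a : nat).+1.-1 < n)%N by rewrite /= ltn_ord.
have Hb : ((b : nat).+1.-1 < m)%N by rewrite /= ltn_ord.
have := H (a : nat).+1 (b : nat).+1 ltac:(have := ltn_ord a; lia) ltac:(have := ltn_ord b; lia).
rewrite (entE _ Ha Hb) (entE _ Ha Hb).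
have -> : Ordinal Ha = a by apply: val_inj.
by have -> : Ordinal Hb = b by apply: val_inj.
Qed.

Lemma ent_pos n m (X : 'M[R]_(n, m)) : (forall i j, 0 < X i j) -> pos_on n m (ent X).
Proof.
move=> Xpos p q Hp Hq; have Hp' : (p.-1 < n)%N by lia.
have Hq' : (q.-1 < m)%N by lia.
by rewrite (entE _ Hp' Hq').
Qed.

Lemma ent_symE n (W : 'M[R]_n) p q : W^T = W -> ent W p q = ent W q p.
Proof. by move=> Wsym; rewrite -[in LHS]Wsym ent_tr. Qed.

Lemma ent_sym n (W : 'M[R]_n) : W^T = W -> transp (ent W) = ent W.
Proof.
move=> Wsym; apply: functional_extensionality => p; apply: functional_extensionality => q.
exact: ent_symE.
Qed.

Lemma ent_gT n m (X : 'M[R]_(n, m)) :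
  agree_on n m (ent (gT X)) (run_moves gmove (T_moves n m) (ent X)).
Proof. by rewrite gT_run; apply: ent_run; [apply: T_moves_in|]. Qed.

Lemma ent_gT_ulblock n m p q (X : 'M[R]_(n, m)) : (p <= n)%N -> (q <= m)%N ->
  agree_on p q (ent (gT (ulblock p q X))) (run_moves gmove (T_moves p q) (ent X)).
Proof.
move=> pn qm; rewrite gT_run; apply: ent_run; first exact: T_moves_in.
by move=> a b Ha Hb; rewrite ent_ulblock.
Qed.

Lemma ulblock_pos n (W : 'M[R]_n.+1) : (forall i j, 0 < W i j) ->
  forall i j, 0 < ulblock n n W i j.
Proof.
move=> Wpos i j; rewrite mxE.
have Hi : ((i : nat).+1.-1 < n.+1)%N by have := ltn_ord i; rewrite /=; lia.
have Hj : ((j : nat).+1.-1 < n.+1)%N by have := ltn_ord j; rewrite /=; lia.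
by have := entE W Hi Hj; rewrite /ent /= => ->.
Qed.

Lemma ulblock_sym n (W : 'M[R]_n.+1) : W^T = W -> (ulblock n n W)^T = ulblock n n W.
Proof.
move=> Wsym; apply/matrixP => i j; rewrite !mxE.
by have := ent_symE (j : nat).+1 (i : nat).+1 Wsym; rewrite /ent /=.
Qed.

End MatrixEntries.

Section Recursion.
Variable R : realFieldType.

Definition Smat n (W : 'M[R]_n) : 'M[R]_(n.-1, n) :=
  (gR n (stack_row n (gT (ulblock n.-1 n.-1 W)) (fun j => ent W j n)))^T.

Variables (n : nat) (W : 'M[R]_n).
Hypotheses (Wsym : W^T = W) (n_ge2 : (2 <= n)%N).

Lemma ent_Smat p q : (0 < p <= n.-1)%N -> (0 < q <= n)%N ->
  ent (Smat W) p q = Grows n (ent W) p q.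
Proof.
move=> Hp Hq.
have Rn_in : moves_in n n.-1 (R_moves n.-1 n) by apply: R_moves_in.
have stack_Tprev : agree_on n n.-1
    (ent (stack_row n (gT (ulblock n.-1 n.-1 W)) (fun j => ent W j n))) (Tprev n (ent W)).
  move=> a b Ha Hb; rewrite ent_stack_row //.
  case: ifP => Han; first by rewrite ent_gT_ulblock //; lia.
  have -> : a = n by lia.
  by rewrite Tprev_last_row; [exact: ent_symE | lia].
rewrite /Smat ent_tr gR_run (ent_run Rn_in (fun a b _ _ => erefl)) //; try lia.
rewrite (run_agree Rn_in stack_Tprev) //; try lia.
rewrite (Grows_transp n (ent_sym Wsym)) /transp /Tprev.
by rewrite [in RHS]T_moves_pred ?run_moves_cat //; lia.
Qed.

Lemma stack_Smat : agree_on n n (ent (stack_row n (Smat W) (fun j => ent W j n))) (Grows n (ent W)).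
Proof.
move=> p q Hp Hq; rewrite ent_stack_row //.
case: ifP => Hpn; first by rewrite ent_Smat //; lia.
have -> : p = n by lia.
by rewrite Grows_last_row //; exact: ent_symE.
Qed.

Lemma gT_recursion : gT W = gR n (stack_row n (Smat W) (fun j => ent W j n)).
Proof.
apply: matrix_ent => p q Hp Hq.
rewrite ent_gT // -/(Tfull n (ent W)) Tfull_Grows // gR_run.
by rewrite (ent_run (@R_moves_in n n n (leqnn n)) stack_Smat).
Qed.

End Recursion.

Section DiagonalProduct.
Variable R : realFieldType.
Implicit Type t : nat -> R.

Definition prod_same_parity t k := \prod_(0 <= j < ((k - 1)./2).+1) t (k - 2 * j)%N.
Definition prod_other_parity t k := \prod_(0 <= j < k./2) t (k - 1 - 2 * j)%N.

Lemma prod_same_parityS t k : prod_same_parity t k.+1 = t k.+1 * prod_other_parity t k.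
Proof.
rewrite /prod_same_parity /prod_other_parity big_nat_recl // subn1 /= muln0 subn0.
by congr (_ * _); apply: eq_big_nat => j Hj; congr t; lia.
Qed.

Lemma prod_other_parityS t k : (0 < k)%N -> prod_other_parity t k.+1 = prod_same_parity t k.
Proof.
move=> Hk; rewrite /prod_same_parity /prod_other_parity (_ : k.+1./2 = ((k - 1)./2).+1)%N;
  last lia.
by apply: eq_big_nat => j Hj; congr t; lia.
Qed.

Lemma prod_parity_altprod t n : (0 < n)%N ->
  prod_same_parity t n / prod_other_parity t n = altprod t n.
Proof.
elim: n => [|n IH] // _; case: (posnP n) => [->|n_gt0].
  by rewrite /prod_same_parity /prod_other_parity /= big_nat1 big_geq.
by rewrite prod_same_parityS prod_other_parityS // /= -IH // invf_div mulrA.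
Qed.

Lemma prod_odd_nat (F : nat -> R) n :
  \prod_(0 <= j < n.+1./2) F (2 * j).+1 = \prod_(1 <= i < n.+1 | odd i) F i.
Proof.
rewrite [RHS]big_mkcond; elim: n => [|n IH]; first by rewrite !big_geq.
rewrite [RHS]big_nat_recr // -IH; case: (boolP (odd n.+1)) => Ho.
  rewrite (_ : n.+2./2 = n.+1./2.+1)%N; last by move: Ho; lia.
  by rewrite [LHS]big_nat_recr //; congr (_ * F _); move: Ho; lia.
by rewrite (_ : n.+2./2 = n.+1./2)%N ?Monoid.mulm1 //; move: Ho; lia.
Qed.

Lemma prod_even_nat (F : nat -> R) n :
  \prod_(0 <= j < n./2) F (2 * j).+2 = \prod_(1 <= i < n.+1 | ~~ odd i) F i.
Proof.
rewrite [RHS]big_mkcond; elim: n => [|n IH]; first by rewrite !big_geq.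
rewrite [RHS]big_nat_recr // -IH; case: (boolP (odd n.+1)) => Ho.
  by rewrite (_ : n.+1./2 = n./2)%N ?Monoid.mulm1 //; move: Ho; lia.
rewrite (_ : n.+1./2 = n./2.+1)%N; last by move: Ho; lia.
by rewrite [LHS]big_nat_recr //; congr (_ * F _); move: Ho; lia.
Qed.

Lemma expr4_halfS n : 4 ^+ n.+1./2 = (if odd n then 4 else 1) * 4 ^+ n./2 :> R.
Proof.
case: (boolP (odd n)) => Ho; last by rewrite mul1r (_ : n.+1./2 = n./2)%N //; move: Ho; lia.
by rewrite -exprS (_ : n.+1./2 = n./2.+1)%N //; move: Ho; lia.
Qed.

Lemma altprod_diag_gT n (W : 'M[R]_n) : (forall i j, 0 < W i j) -> W^T = W -> (0 < n)%N ->
  altprod (fun p => ent (gT W) p p) n = 4 ^+ n./2 * \prod_(1 <= i < n.+1) ent W i i.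
Proof.
elim: n W => [|n IH] W Wpos Wsym _ //.
have T_W := ent_gT W.
case: (posnP n) => [n0|n_gt0].
  subst n; rewrite /= T_W // /run_moves /= /gmove /=.
  by rewrite big_nat1 expr0 mul1r divr1.
have n_ge2 : (2 <= n.+1)%N by lia.
have w_sym := ent_sym Wsym.
rewrite (eq_altprod (t' := fun p => Tfull n.+1 (ent W) p p)); last first.
  by move=> p; rewrite inE => Hp; rewrite T_W.
rewrite altprod_Tfull_diag_last //; last exact: ent_pos.
rewrite (eq_altprod (t' := fun p => ent (gT (ulblock n n W)) p p)); last first.
  by move=> p; rewrite inE => Hp; rewrite Grows_diag ?ent_gT_ulblock //; lia.
rewrite succnK (IH _ (ulblock_pos Wpos) (ulblock_sym Wsym) n_gt0).
rewrite [in RHS]big_nat_recr // expr4_halfS.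
have -> : \prod_(1 <= i < n.+1) ent (ulblock n n W) i i = \prod_(1 <= i < n.+1) ent W i i.
  by apply: eq_big_nat => i Hi; rewrite ent_ulblock //; lia.
by rewrite /=; ring.
Qed.

End DiagonalProduct.

Unset Implicit Arguments.

Theorem lemma5p1 (R : realFieldType) (n : nat) (W : 'M[R]_n)
  (Wpos : forall i j, 0 < W i j) (Wsym : W^T = W) :
  let w := ent W in
  let t := ent (gT W) in
  (* S = [ R^{n,n-1}_n ( T^{n-1,n-1}(W_{n-1,n-1}) ; w_{1n} ... w_{n-1,n} ) ]^t *)
  let S : 'M[R]_(n.-1, n) :=
    (gR n (stack_row n (gT (ulblock n.-1 n.-1 W)) (fun j => w j n)))^T in
  ((2 <= n)%N ->
     [/\ gT W = gR n (stack_row n S (fun j => w j n)),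
         (forall i j, (1 <= i)%N -> (i < j)%N -> (j <= n)%N -> t i j = ent S i j),
         t 1%N 1%N = ent S 1%N 2%N / (2 * ent S 1%N 1%N),
         (forall i, (2 <= i)%N -> (i <= n.-1)%N ->
            t i i = ent S i i.+1 * ent S i.-1 i / ent S i i)
       & t n n = 2 * ent S n.-1 n * w n n])
  /\
  ((1 <= n)%N ->
     (4 ^+ (n./2) * \prod_(1 <= i < n.+1) w i i
       = (\prod_(0 <= j < ((n - 1)./2).+1) t (n - 2 * j)%N (n - 2 * j)%N)
         / (\prod_(0 <= j < n./2) t (n - 1 - 2 * j)%N (n - 1 - 2 * j)%N))
     /\
     ((\prod_(0 <= j < ((n - 1)./2).+1) t (n - 2 * j)%N (n - 2 * j)%N)
         / (\prod_(0 <= j < n./2) t (n - 1 - 2 * j)%N (n - 1 - 2 * j)%N)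
       = (\prod_(1 <= i < n.+1 | odd i) zshape W i)
         / (\prod_(1 <= i < n.+1 | ~~ odd i) zshape W i))).
Proof.
move=> w t S.
have t_eq : agree_on n n t (Tfull n w) := ent_gT W.
have w_sym : transp w = w := ent_sym Wsym.
have w_pos : pos_on n n w := ent_pos Wpos.
split=> [n_ge2 | n_gt0].
  split.
  - exact: gT_recursion.
  - by move=> i j *; rewrite t_eq ?Tfull_upper ?ent_Smat //; lia.
  - by rewrite t_eq ?Tfull_diag1 ?ent_Smat //; lia.
  - by move=> i *; rewrite t_eq ?Tfull_diag_mid ?ent_Smat //; lia.
  - by rewrite t_eq ?Tfull_diag_last ?ent_Smat //; lia.
split.
  rewrite -(altprod_diag_gT Wpos Wsym n_gt0).
  exact/esym/(prod_parity_altprod (fun p => t p p) n_gt0).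
congr (_ / _).
  rewrite -prod_odd_nat (_ : n.+1./2 = ((n - 1)./2).+1)%N; last lia.
  by apply: eq_big_nat => j Hj; rewrite /zshape; congr (ent _ _ _); lia.
by rewrite -prod_even_nat; apply: eq_big_nat => j Hj; rewrite /zshape; congr (ent _ _ _); lia.
Qed.
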